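(* Among the triangle centers $X_1,\dots,X_{29}$, exactly $X_{16}$, $X_{23}$, $X_{26}$ have the property that there exists an acute triangle $ABC$ with $a<b<c$ in which $\mathrm{Atrace}(X_n)$ lies on the extension of $BC$ beyond $C$. For every other $n\le 29$, in every acute triangle with $a<b<c$, $\mathrm{Atrace}(X_n)$ does not lie on the extension of $BC$ beyond $C$.
   Context: $X_n$ denotes the $n$-th triangle center listed in Kimberling's Encyclopedia of Triangle Centers (ETC), given by barycentric coordinates in terms of $a=BC$, $b=CA$, $c=AB$. For a point $P=(p:q:r)\ne A$, $\mathrm{Atrace}(P)$ is the intersection of line $AP$ with line $BC$, namely $(0:q:r)$; it lies on the extension of $BC$ beyond $C$ iff $q(q+r)<0$. *)

From Stdlib Require Import Reals Lra.
Open Scope R_scope.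

(* Conventions: a = BC, b = CA, c = AB.  A point is given by (homogeneous)
   barycentric coordinates (p, q, r) w.r.t. (A, B, C). *)

(* Conway-type quantity (scaled by 2): SA = b^2 + c^2 - a^2 = 2 bc cos A. *)
Definition SA (a b c : R) : R := b*b + c*c - a*a.

Definition area (a b c : R) : R :=
  sqrt ((a+b+c) * (-a+b+c) * (a-b+c) * (a+b-c)) / 4.

(* Where ETC lists a rational
   expression, the coordinates below are multiplied by a common factor which is
   symmetric in a,b,c and nonzero for every acute triangle. *)
Definition etc_first (n : nat) (a b c : R) : R :=
  let sa := SA a b c in let sb := SA b c a in let sc := SA c a b in
  let D := area a b c in
  match n with
  | 1 => a
  | 2 => 1
  | 3 => a*a * sa
  | 4 => sb * sc                                  (* ETC: 1/SA *)
  | 5 => a*a*(b*b + c*c) - (b*b - c*c)^2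
  | 6 => a*a
  | 7 => (c+a-b) * (a+b-c)                        (* ETC: 1/(b+c-a) *)
  | 8 => b+c-a
  | 9 => a*(b+c-a)
  | 10 => b+c
  | 11 => (b-c)^2 * (b+c-a)
  | 12 => (b+c)^2 * (c+a-b) * (a+b-c)             (* ETC: (b+c)^2/(b+c-a) *)
  | 13 => a^4 - 2*(b*b - c*c)^2 + a*a*(b*b + c*c + 4*sqrt 3 * D)
  | 14 => a^4 - 2*(b*b - c*c)^2 + a*a*(b*b + c*c - 4*sqrt 3 * D)
  | 15 => a*a * (sqrt 3 * sa + 4*D)
  | 16 => a*a * (sqrt 3 * sa - 4*D)
  | 17 => (sb + 4*sqrt 3 * D) * (sc + 4*sqrt 3 * D) (* ETC: 1/(SA + 4 sqrt3 D) *)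
  | 18 => (sb - 4*sqrt 3 * D) * (sc - 4*sqrt 3 * D) (* ETC: 1/(SA - 4 sqrt3 D) *)
  | 19 => a * sb * sc                             (* ETC: a/SA *)
  | 20 => sa*sb + sa*sc - sb*sc
  | 21 => a*(b+c-a)/(b+c)
  | 22 => a*a*(b^4 + c^4 - a^4)
  | 23 => a*a*(b^4 + c^4 - a^4 - b*b*c*c)
  | 24 => a*a*(sa*sa - 2*b*b*c*c) * sb * sc       (* ETC trilinears: sec A cos 2A *)
  | 25 => a*a * sb * sc                           (* ETC: a^2/SA *)
  | 26 => a*a*(b*b*(2*(sb/(2*c*a))^2 - 1) + c*c*(2*(sc/(2*a*b))^2 - 1)
                - a*a*(2*(sa/(2*b*c))^2 - 1))
            (* ETC trilinears: a(b^2 cos 2B + c^2 cos 2C - a^2 cos 2A) *)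
  | 27 => (c+a)*(a+b) * sb * sc                   (* ETC trilinears: sec A/(b+c) *)
  | 28 => a*(c+a)*(a+b) * sb * sc                 (* ETC trilinears: tan A/(b+c) *)
  | 29 => (b+c-a)*(c+a)*(a+b) * sb * sc           (* ETC trilinears: sec A/(cos B+cos C) *)
  | _ => 0
  end.

Definition ETC (n : nat) (a b c : R) : R * R * R :=
  (etc_first n a b c, etc_first n b c a, etc_first n c a b).

Definition acute_triangle (a b c : R) : Prop :=
  0 < a /\ 0 < b /\ 0 < c /\ a < b + c /\ b < c + a /\ c < a + b /\
  a*a < b*b + c*c /\ b*b < c*c + a*a /\ c*c < a*a + b*b.

(* Atrace(P) = (0 : q : r) for P = (p : q : r); it lies on the extension of BC
   beyond C iff q (q + r) < 0. *)
Definition Atrace (P : R * R * R) : R * R * R :=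
  let '(p, q, r) := P in (0, q, r).

Definition Atrace_beyond_C (P : R * R * R) : Prop :=
  let '(p, q, r) := P in q * (q + r) < 0.

(* In an acute triangle twenty of the centers (positive_centers) have all
   barycentrics positive, so their A-trace lies inside BC.  For the other
   non-exceptional centers the coordinates q, r still satisfy q (q + r) >= 0
   when a < b < c: directly for X11, X20, X22 and X24, while X14 and X18 have
   the form V W : W U : U V, for which q (q + r) = U^2 W (W + V).  There
   W <= 0 because the largest angle C is at least 60 degrees, and W + V <= 0
   because the smallest side satisfies sqrt 3 a^2 <= 4 area.  The triangles
   with sides 13, 14, 15 and 4, 5, 6 witness X16, X23 and X26. *)

From Stdlib Require Import Reals Lra Lia Psatz List.
Import ListNotations.
Open Scope R_scope.

Definition heron (a b c : R) : R := (a+b+c) * (-a+b+c) * (a-b+c) * (a+b-c).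

Lemma acute_triangle_rot a b c : acute_triangle a b c -> acute_triangle b c a.
Proof. unfold acute_triangle; lra. Qed.

Lemma SA_pos a b c : acute_triangle a b c ->
  0 < SA a b c /\ 0 < SA b c a /\ 0 < SA c a b.
Proof. unfold acute_triangle, SA; lra. Qed.

Lemma SA_add a b c : SA b c a + SA c a b = 2 * (a * a).
Proof. unfold SA; ring. Qed.

Lemma heron_SA a b c : heron a b c = 4 * (a * a * (b * b)) - SA c a b * SA c a b.
Proof. unfold heron, SA; ring. Qed.

Lemma heron_pos a b c : acute_triangle a b c -> 0 < heron a b c.
Proof.
  intros (Ha & Hb & Hc & Habc & Hbca & Hcab & _).
  unfold heron; repeat apply Rmult_lt_0_compat; lra.
Qed.

Lemma area_rot a b c : area b c a = area a b c.
Proof. unfold area; do 2 f_equal; ring. Qed.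

Lemma area_pos a b c : acute_triangle a b c -> 0 < area a b c.
Proof.
  intros H; apply Rdiv_lt_0_compat; [apply sqrt_lt_R0, heron_pos, H | lra].
Qed.

Lemma area_sqr a b c : 0 <= heron a b c -> 16 * (area a b c * area a b c) = heron a b c.
Proof.
  intros H; unfold area; fold (heron a b c).
  rewrite <- (sqrt_sqrt (heron a b c) H) at 3; field.
Qed.

Lemma sqrt3_pos : 0 < sqrt 3.
Proof. apply sqrt_lt_R0; lra. Qed.

Lemma sqrt3_sqr : sqrt 3 * sqrt 3 = 3.
Proof. apply sqrt_sqrt; lra. Qed.

Lemma etc_first5_SA a b c :
  etc_first 5 a b c = SA b c a * SA c a b + a * a * SA a b c.
Proof. cbn [etc_first]; unfold SA; ring. Qed.

Lemma etc_first13_factor a b c : 0 <= heron a b c ->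
  2 * etc_first 13 a b c =
  (sqrt 3 * SA b c a + 4 * area a b c) * (sqrt 3 * SA c a b + 4 * area a b c).
Proof.
  intros H; pose proof (area_sqr a b c H); pose proof sqrt3_sqr.
  cbn [etc_first]; unfold heron, SA in *; nra.
Qed.

Lemma etc_first14_factor a b c : 0 <= heron a b c ->
  2 * etc_first 14 a b c =
  (sqrt 3 * SA b c a - 4 * area a b c) * (sqrt 3 * SA c a b - 4 * area a b c).
Proof.
  intros H; pose proof (area_sqr a b c H); pose proof sqrt3_sqr.
  cbn [etc_first]; unfold heron, SA in *; nra.
Qed.

Definition positive_centers : list nat :=
  [1; 2; 3; 4; 5; 6; 7; 8; 9; 10; 12; 13; 15; 17; 19; 21; 25; 27; 28; 29]%nat.

Ltac pos_tac :=
  repeat (first [ lra | apply Rmult_lt_0_compat | apply Rplus_lt_0_compat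
                | apply Rinv_0_lt_compat | apply pow_lt ]).

Lemma etc_first_pos n a b c : In n positive_centers -> acute_triangle a b c ->
  0 < etc_first n a b c.
Proof.
  intros Hn H.
  pose proof (area_pos a b c H). pose proof sqrt3_pos.
  destruct (SA_pos a b c H) as (Sa & Sb & Sc).
  pose proof H as (Ha & Hb & Hc & Habc & Hbca & Hcab & _).
  simpl in Hn; repeat destruct Hn as [<- | Hn]; try contradiction.
  all: try solve [cbn [etc_first]; pos_tac].
  - rewrite etc_first5_SA; pos_tac.
  - apply (Rmult_lt_reg_l 2); [lra |].
    rewrite Rmult_0_r, etc_first13_factor by (apply Rlt_le, heron_pos, H); pos_tac.
Qed.

Lemma not_beyond_C p q r : 0 <= q * (q + r) -> ~ Atrace_beyond_C (p, q, r).
Proof. simpl; lra. Qed.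

Lemma not_beyond_C_pos p q r : 0 < q -> 0 < r -> ~ Atrace_beyond_C (p, q, r).
Proof. intros; apply not_beyond_C; nra. Qed.

Lemma not_beyond_C_neg p q r : q < 0 -> r < 0 -> ~ Atrace_beyond_C (p, q, r).
Proof. intros; apply not_beyond_C; nra. Qed.

Lemma le_sqrt3_mul x D : 0 <= D -> sqrt 3 * x <= 4 * D -> x <= 4 * sqrt 3 * D.
Proof. pose proof sqrt3_pos; pose proof sqrt3_sqr; nra. Qed.

Lemma reciprocal_trace_nonneg X Y Z : Z <= 0 -> Z + Y <= 0 ->
  0 <= Z * X * (Z * X + X * Y).
Proof.
  intros; replace (Z * X * (Z * X + X * Y)) with ((X * X) * (Z * (Z + Y))) by ring.
  apply Rmult_le_pos; nra.
Qed.

Section Ordered_sides.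

Variables a b c : R.
Hypothesis acute : acute_triangle a b c.
Hypothesis a_lt_b : a < b.
Hypothesis b_lt_c : b < c.

Lemma SA_largest_angle_le : SA c a b <= a * b.
Proof.
  pose proof acute as (Ha & Hb & Hc & _). unfold SA; nra.
Qed.

Lemma heron_ge_smallest_side : 3 * (a * a * (a * a)) <= heron a b c.
Proof.
  pose proof acute as (Ha & Hb & Hc & _ & _ & _ & _ & _ & Hc2).
  set (x := a * a); set (y := b * b); set (z := c * c).
  assert (x < y) by (unfold x, y; nra).
  assert (y < z) by (unfold y, z; nra).
  assert (0 < x) by (unfold x; nra).
  assert (z - y < x) by (unfold x, y, z; lra).
  replace (heron a b c) with (2 * (x*y + y*z + z*x) - x*x - y*y - z*z)
    by (unfold heron, x, y, z; ring).
  nra.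
Qed.

Lemma sqrt3_SA_le_area : sqrt 3 * SA c a b <= 4 * area a b c.
Proof.
  pose proof (area_sqr a b c (Rlt_le _ _ (heron_pos a b c acute))).
  pose proof (area_pos a b c acute). pose proof sqrt3_sqr.
  pose proof SA_largest_angle_le. rewrite heron_SA in *.
  destruct (SA_pos a b c acute) as (_ & _ & Sc).
  pose proof acute as (Ha & Hb & _).
  apply Rsqr_incr_0_var; unfold Rsqr; nra.
Qed.

Lemma sqrt3_sqr_le_area : sqrt 3 * (a * a) <= 4 * area a b c.
Proof.
  pose proof (area_sqr a b c (Rlt_le _ _ (heron_pos a b c acute))).
  pose proof (area_pos a b c acute). pose proof sqrt3_sqr.
  pose proof heron_ge_smallest_side.
  apply Rsqr_incr_0_var; unfold Rsqr; nra.
Qed.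

Lemma X11_not_beyond_C : ~ Atrace_beyond_C (ETC 11 a b c).
Proof.
  pose proof acute as (Ha & Hb & Hc & Habc & Hbca & Hcab & _).
  unfold ETC; apply not_beyond_C; cbn [etc_first].
  assert (0 < (c - a) ^ 2 * (c + a - b)) by (apply Rmult_lt_0_compat; [apply pow_lt |]; lra).
  assert (0 <= (a - b) ^ 2 * (a + b - c)) by (apply Rmult_le_pos; [apply pow2_ge_0 |]; lra).
  nra.
Qed.

Lemma X14_not_beyond_C : ~ Atrace_beyond_C (ETC 14 a b c).
Proof.
  pose proof (heron_pos _ _ _ (acute_triangle_rot _ _ _ acute)) as Hq.
  pose proof (heron_pos _ _ _ (acute_triangle_rot _ _ _ (acute_triangle_rot _ _ _ acute))) as Hr.
  pose proof (etc_first14_factor b c a (Rlt_le _ _ Hq)) as Eq.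
  pose proof (etc_first14_factor c a b (Rlt_le _ _ Hr)) as Er.
  rewrite (area_rot a b c) in Eq. rewrite (area_rot b c a), (area_rot a b c) in Er.
  pose proof sqrt3_SA_le_area.
  pose proof sqrt3_sqr_le_area.
  apply not_beyond_C.
  set (D := area a b c) in *.
  set (X := sqrt 3 * SA a b c - 4 * D) in *.
  set (Y := sqrt 3 * SA b c a - 4 * D) in *.
  set (Z := sqrt 3 * SA c a b - 4 * D) in *.
  replace (etc_first 14 b c a) with (Z * X / 2) by lra.
  replace (etc_first 14 c a b) with (X * Y / 2) by lra.
  replace (Z * X / 2 * (Z * X / 2 + X * Y / 2)) with (Z * X * (Z * X + X * Y) / 4) by field.
  assert (HZ : Z <= 0) by (unfold Z; lra).
  assert (HZY : Z + Y <= 0).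
  { unfold Z, Y.
    replace (sqrt 3 * SA c a b - 4 * D + (sqrt 3 * SA b c a - 4 * D))
      with (sqrt 3 * (2 * (a * a)) - 8 * D) by (rewrite <- (SA_add a b c); ring).
    lra. }
  apply Rmult_le_pos; [apply reciprocal_trace_nonneg | ]; lra.
Qed.

Lemma X18_not_beyond_C : ~ Atrace_beyond_C (ETC 18 a b c).
Proof.
  pose proof (area_pos a b c acute).
  pose proof (le_sqrt3_mul _ _ (Rlt_le _ _ H) sqrt3_SA_le_area).
  pose proof (le_sqrt3_mul _ _ (Rlt_le _ _ H) sqrt3_sqr_le_area).
  unfold ETC; apply not_beyond_C; cbn [etc_first].
  rewrite (area_rot a b c), (area_rot b c a), (area_rot a b c).
  set (D := area a b c) in *.
  set (X := SA a b c - 4 * sqrt 3 * D).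
  set (Y := SA b c a - 4 * sqrt 3 * D).
  set (Z := SA c a b - 4 * sqrt 3 * D).
  pose proof (SA_add a b c).
  apply reciprocal_trace_nonneg; unfold Y, Z; lra.
Qed.

Lemma X20_not_beyond_C : ~ Atrace_beyond_C (ETC 20 a b c).
Proof.
  destruct (SA_pos a b c acute) as (Sa & Sb & Sc).
  pose proof acute as (Ha & Hb & Hc & _).
  assert (SA c a b < SA b c a) by (unfold SA; nra).
  unfold ETC; apply not_beyond_C; cbn [etc_first].
  set (sa := SA a b c); set (sb := SA b c a); set (sc := SA c a b).
  assert (0 < sb * sc + sb * sa - sc * sa) by (unfold sa, sb, sc in *; nra).
  replace (sb * sc + sb * sa - sc * sa + (sc * sa + sc * sb - sa * sb))
    with (2 * (sb * sc)) by ring.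
  apply Rmult_le_pos; [lra | unfold sb, sc; nra].
Qed.

Lemma X22_not_beyond_C : ~ Atrace_beyond_C (ETC 22 a b c).
Proof.
  pose proof acute as (Ha & Hb & Hc & Habc & Hbca & Hcab & Ha2 & Hb2 & Hc2).
  unfold ETC; apply not_beyond_C; cbn [etc_first].
  set (x := a * a) in *; set (y := b * b) in *; set (z := c * c) in *.
  replace (b ^ 4) with (y * y) by (unfold y; ring).
  replace (c ^ 4) with (z * z) by (unfold z; ring).
  replace (a ^ 4) with (x * x) by (unfold x; ring).
  assert (0 < x) by (unfold x; nra).
  assert (y < z) by (unfold y, z; nra).
  assert (0 < y * (z * z + x * x - y * y)) by (apply Rmult_lt_0_compat; nra).
  replace (y * (z * z + x * x - y * y) + z * (x * x + y * y - z * z))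
    with ((y + z) * ((x + y - z) * (x + z - y))) by ring.
  assert (0 < (y + z) * ((x + y - z) * (x + z - y))) by (repeat apply Rmult_lt_0_compat; lra).
  nra.
Qed.

Lemma X24_not_beyond_C : ~ Atrace_beyond_C (ETC 24 a b c).
Proof.
  destruct (SA_pos a b c acute) as (Sa & Sb & Sc).
  pose proof acute as (Ha & Hb & Hc & _ & _ & _ & Ha2 & Hb2 & Hc2).
  assert (SA b c a * SA b c a < 2 * (c * c) * (a * a)).
  { assert (SA b c a < 2 * (a * a)) by (unfold SA; lra).
    assert (SA b c a < c * c) by (unfold SA; nra).
    nra. }
  assert (SA c a b * SA c a b < 2 * (a * a) * (b * b)).
  { assert (SA c a b < a * a) by (unfold SA; nra).
    assert (SA c a b < b * b) by (unfold SA; nra).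
    nra. }
  unfold ETC; apply not_beyond_C_neg; cbn [etc_first].
  - assert (0 < b * b * (2 * c * c * (a * a) - SA b c a * SA b c a)) by
      (apply Rmult_lt_0_compat; nra).
    assert (0 < SA c a b * SA a b c) by nra.
    nra.
  - assert (0 < c * c * (2 * a * a * (b * b) - SA c a b * SA c a b)) by
      (apply Rmult_lt_0_compat; nra).
    assert (0 < SA a b c * SA b c a) by nra.
    nra.
Qed.

End Ordered_sides.

Lemma center_cases n : (1 <= n <= 29)%nat -> ~ (n = 16 \/ n = 23 \/ n = 26)%nat ->
  In n positive_centers \/ (n = 11 \/ n = 14 \/ n = 18 \/ n = 20 \/ n = 22 \/ n = 24)%nat.
Proof. simpl; lia. Qed.

Lemma area_13_14_15 : area 13 14 15 = 84.
Proof.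
  unfold area.
  replace ((13 + 14 + 15) * (- (13) + 14 + 15) * (13 - 14 + 15) * (13 + 14 - 15)) with (336 * 336)
    by ring.
  rewrite sqrt_square; lra.
Qed.

Lemma acute_triangle_4_5_6 : acute_triangle 4 5 6.
Proof. unfold acute_triangle; lra. Qed.

Lemma acute_triangle_13_14_15 : acute_triangle 13 14 15.
Proof. unfold acute_triangle; lra. Qed.

Lemma X16_beyond_C : Atrace_beyond_C (ETC 16 13 14 15).
Proof.
  unfold ETC, Atrace_beyond_C; cbn [etc_first].
  rewrite (area_rot 13 14 15), (area_rot 14 15 13), (area_rot 13 14 15), area_13_14_15.
  unfold SA.
  pose proof sqrt3_sqr; pose proof sqrt3_pos.
  assert (1.7 < sqrt 3 < 1.8) by nra.
  assert (0 < 14 * 14 * (sqrt 3 * (15 * 15 + 13 * 13 - 14 * 14) - 4 * 84)) by lra.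
  assert (14 * 14 * (sqrt 3 * (15 * 15 + 13 * 13 - 14 * 14) - 4 * 84)
          + 15 * 15 * (sqrt 3 * (13 * 13 + 14 * 14 - 15 * 15) - 4 * 84) < 0) by lra.
  nra.
Qed.

Lemma X23_beyond_C : Atrace_beyond_C (ETC 23 4 5 6).
Proof. unfold ETC, Atrace_beyond_C; cbn [etc_first]; lra. Qed.

Lemma X26_beyond_C : Atrace_beyond_C (ETC 26 4 5 6).
Proof. unfold ETC, Atrace_beyond_C; cbn [etc_first]; unfold SA; lra. Qed.

Theorem theorem6p10 :
  (forall n : nat, (n = 16 \/ n = 23 \/ n = 26)%nat ->
     exists a b c : R, acute_triangle a b c /\ a < b < c /\
       Atrace_beyond_C (ETC n a b c)) /\
  (forall n : nat, (1 <= n <= 29)%nat -> ~ (n = 16 \/ n = 23 \/ n = 26)%nat ->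
     forall a b c : R, acute_triangle a b c -> a < b < c ->
       ~ Atrace_beyond_C (ETC n a b c)).
Proof.
  split.
  - intros n [-> | [-> | ->]].
    + exists 13, 14, 15; split; [exact acute_triangle_13_14_15 | split; [lra | exact X16_beyond_C]].
    + exists 4, 5, 6; split; [exact acute_triangle_4_5_6 | split; [lra | exact X23_beyond_C]].
    + exists 4, 5, 6; split; [exact acute_triangle_4_5_6 | split; [lra | exact X26_beyond_C]].
  - intros n Hn Hne a b c H [Hab Hbc].
    destruct (center_cases n Hn Hne) as [Hpos | [-> | [-> | [-> | [-> | [-> | ->]]]]]].
    + apply not_beyond_C_pos; apply etc_first_pos; auto using acute_triangle_rot.
    + apply X11_not_beyond_C; assumption.
    + apply X14_not_beyond_C; assumption.
    + apply X18_not_beyond_C; assumption.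
    + apply X20_not_beyond_C; assumption.
    + apply X22_not_beyond_C; assumption.
    + apply X24_not_beyond_C; assumption.
Qed.
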